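(* Let $f:G\to H$ be a morphism of cubical $\omega$-categories with connections such that the induced morphism of $\omega$-categories $\gamma f:\gamma G\to\gamma H$ is an isomorphism. Then $f$ is an isomorphism.
   Context: A cubical $\omega$-category with connections $G$ consists of sets $G_n$ ($n\ge0$), face maps $\partial^\alpha_i:G_n\to G_{n-1}$, degeneracies $\varepsilon_i:G_{n-1}\to G_n$, connections $\Gamma^\alpha_i:G_n\to G_{n+1}$ ($1\le i\le n$, $\alpha=\pm$) and partial compositions $\circ_j$ on $G_n$ ($1\le j\le n$, $a\circ_jb$ defined iff $\partial^+_ja=\partial^-_jb$) satisfying: the cubical identities $\partial^\alpha_i\partial^\beta_j=\partial^\beta_{j-1}\partial^\alpha_i$ ($i<j$), $\varepsilon_i\varepsilon_j=\varepsilon_{j+1}\varepsilon_i$ ($i\le j$), $\partial^\alpha_i\varepsilon_j=\varepsilon_{j-1}\partial^\alpha_i$ ($i<j$), $\varepsilon_j\partial^\alpha_{i-1}$ ($i>j$), $\mathrm{id}$ ($i=j$); the connection identities $\Gamma^\alpha_i\Gamma^\beta_j=\Gamma^\beta_{j+1}\Gamma^\alpha_i$ ($i<j$), $\Gamma^\alpha_i\Gamma^\alpha_i=\Gamma^\alpha_{i+1}\Gamma^\alpha_i$, $\Gamma^\alpha_i\varepsilon_j=\varepsilon_{j+1}\Gamma^\alpha_i$ ($i<j$), $\varepsilon_j\Gamma^\alpha_{i-1}$ ($i>j$), $\Gamma^\alpha_j\varepsilon_j=\varepsilon_{j+1}\varepsilon_j$, $\partial^\alpha_i\Gamma^\beta_j=\Gamma^\beta_{j-1}\partial^\alpha_i$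 ($i<j$), $\Gamma^\beta_j\partial^\alpha_{i-1}$ ($i>j+1$), $\partial^\alpha_j\Gamma^\alpha_j=\partial^\alpha_{j+1}\Gamma^\alpha_j=\mathrm{id}$, $\partial^\alpha_j\Gamma^{-\alpha}_j=\partial^\alpha_{j+1}\Gamma^{-\alpha}_j=\varepsilon_j\partial^\alpha_j$; $\partial^-_j(a\circ_jb)=\partial^-_ja$, $\partial^+_j(a\circ_jb)=\partial^+_jb$, $\partial^\alpha_i(a\circ_jb)=\partial^\alpha_ia\circ_{j-1}\partial^\alpha_ib$ ($i<j$), $\partial^\alpha_ia\circ_j\partial^\alpha_ib$ ($i>j$); interchange for $i\ne j$; $\varepsilon_i(a\circ_jb)=\varepsilon_ia\circ_{j+1}\varepsilon_ib$ ($i\le j$), $\varepsilon_ia\circ_j\varepsilon_ib$ ($i>j$); $\Gamma^\alpha_i(a\circ_jb)=\Gamma^\alpha_ia\circ_{j+1}\Gamma^\alpha_ib$ ($i<j$), $\Gamma^\alpha_ia\circ_j\Gamma^\alpha_ib$ ($i>j$); $\Gamma^+_j(a\circ_jb)=(\Gamma^+_ja\circ_j\varepsilon_ja)\circ_{j+1}(\varepsilon_{j+1}a\circ_j\Gamma^+_jb)$, $\Gamma^-_j(a\circ_jb)=(\Gamma^-_ja\circ_j\varepsilon_{j+1}b)\circ_{j+1}(\varepsilon_jb\circ_j\Gamma^-_jb)$; each $\circ_j$ a category structure with identities $\varepsilon_jy$; $\Gamma^+_ix\circ_i\Gamma^-_ix=\varepsilon_{i+1}x$, $\Gamma^+_ix\circ_{i+1}\Gamma^-_ix=\varepsilon_ix$.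 Morphisms preserve all this structure. Folding operations on $G_n$: $\psi_ix=\Gamma^+_i\partial^-_{i+1}x\circ_{i+1}x\circ_{i+1}\Gamma^-_i\partial^+_{i+1}x$ ($1\le i\le n-1$), $\Psi_r=\psi_{r-1}\cdots\psi_1$, $\Phi_n=\Psi_1\Psi_2\cdots\Psi_n$ ($\Phi_0=\Phi_1=\mathrm{id}$). $\gamma G$: the set $\Phi_n(G_n)$ is an $\omega$-category (globular strict $\omega$-category) with $d^\alpha_px=\varepsilon_1^{n-p}(\partial^\alpha_1)^{n-p}x$ and $x\#_py=x\circ_{n-p}y$ for $0\le p<n$, and $d^\alpha_px=x$ with only composites $x\#_px=x$ for $p\ge n$; $\varepsilon_1$ maps $\Phi_n(G_n)$ homomorphically into $\Phi_{n+1}(G_{n+1})$, and $\gamma G$ is the colimit of $\Phi_0(G_0)\xrightarrow{\varepsilon_1}\Phi_1(G_1)\xrightarrow{\varepsilon_1}\cdots$. A morphism $f$ commutes with $\Phi_n$ and $\varepsilon_1$, and $\gamma f$ is the induced morphism of colimits. *)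

From mathcomp Require Import all_boot.

(* Conventions:
   - cell n   = G_n.
   - face n i a    : G_{n+1} -> G_n     is  d^a_i   (valid for 1 <= i <= n+1),
   - degen n i     : G_n -> G_{n+1}     is  eps_i   (valid for 1 <= i <= n+1),
   - conn n i a    : G_n -> G_{n+1}     is  Gamma^a_i (valid for 1 <= i <= n),
   - comp n j a b  : on G_{n+1}         is  a o_j b (valid for 1 <= j <= n+1),
     meaningful only when face n j true a = face n j false b.
   The sign alpha is a bool: true = +, false = -.
   Outside the valid ranges / domain of definition the operations are total
   but unconstrained (junk); all axioms and morphism conditions are only
   imposed in the valid ranges. *)

Record CubCat := {
  cell : nat -> Type;
  face : forall n, nat -> bool -> cell n.+1 -> cell n;
  degen : forall n, nat -> cell n -> cell n.+1;
  conn : forall n, nat -> bool -> cell n -> cell n.+1;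
  comp : forall n, nat -> cell n.+1 -> cell n.+1 -> cell n.+1;
  face_face : forall n i j a b (x : cell n.+2), 1 <= i < j -> j <= n.+2 ->
    face n i a (face n.+1 j b x) = face n j.-1 b (face n.+1 i a x);
  degen_degen : forall n i j (x : cell n), 1 <= i <= j -> j <= n.+1 ->
    degen n.+1 i (degen n j x) = degen n.+1 j.+1 (degen n i x);
  face_degen_lt : forall n i j a (x : cell n.+1), 1 <= i < j -> j <= n.+2 ->
    face n.+1 i a (degen n.+1 j x) = degen n j.-1 (face n i a x);
  face_degen_gt : forall n i j a (x : cell n.+1), 1 <= j < i -> i <= n.+2 ->
    face n.+1 i a (degen n.+1 j x) = degen n j (face n i.-1 a x);
  face_degen_eq : forall n i a (x : cell n), 1 <= i <= n.+1 ->
    face n i a (degen n i x) = x;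
  conn_conn_lt : forall n i j a b (x : cell n), 1 <= i < j -> j <= n ->
    conn n.+1 i a (conn n j b x) = conn n.+1 j.+1 b (conn n i a x);
  conn_conn_eq : forall n i a (x : cell n), 1 <= i <= n ->
    conn n.+1 i a (conn n i a x) = conn n.+1 i.+1 a (conn n i a x);
  conn_degen_lt : forall n i j a (x : cell n), 1 <= i < j -> j <= n.+1 ->
    conn n.+1 i a (degen n j x) = degen n.+1 j.+1 (conn n i a x);
  conn_degen_gt : forall n i j a (x : cell n), 1 <= j < i -> i <= n.+1 ->
    conn n.+1 i a (degen n j x) = degen n.+1 j (conn n i.-1 a x);
  conn_degen_eq : forall n j a (x : cell n), 1 <= j <= n.+1 ->
    conn n.+1 j a (degen n j x) = degen n.+1 j.+1 (degen n j x);
  face_conn_lt : forall n i j a b (x : cell n.+1), 1 <= i < j -> j <= n.+1 ->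
    face n.+1 i a (conn n.+1 j b x) = conn n j.-1 b (face n i a x);
  face_conn_gt : forall n i j a b (x : cell n.+1), 1 <= j -> j.+1 < i -> i <= n.+2 ->
    face n.+1 i a (conn n.+1 j b x) = conn n j b (face n i.-1 a x);
  face_conn_same : forall n j a (x : cell n), 1 <= j <= n ->
    face n j a (conn n j a x) = x /\ face n j.+1 a (conn n j a x) = x;
  face_conn_opp : forall n j a (x : cell n.+1), 1 <= j <= n.+1 ->
    face n.+1 j a (conn n.+1 j (~~ a) x) = degen n j (face n j a x) /\
    face n.+1 j.+1 a (conn n.+1 j (~~ a) x) = degen n j (face n j a x);
  comp_face_minus : forall n j (a b : cell n.+1), 1 <= j <= n.+1 ->
    face n j true a = face n j false b ->
    face n j false (comp n j a b) = face n j false a;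
  comp_face_plus : forall n j (a b : cell n.+1), 1 <= j <= n.+1 ->
    face n j true a = face n j false b ->
    face n j true (comp n j a b) = face n j true b;
  comp_face_lt : forall n i j c (a b : cell n.+2), 1 <= i < j -> j <= n.+2 ->
    face n.+1 j true a = face n.+1 j false b ->
    face n.+1 i c (comp n.+1 j a b) = comp n j.-1 (face n.+1 i c a) (face n.+1 i c b);
  comp_face_gt : forall n i j c (a b : cell n.+2), 1 <= j < i -> i <= n.+2 ->
    face n.+1 j true a = face n.+1 j false b ->
    face n.+1 i c (comp n.+1 j a b) = comp n j (face n.+1 i c a) (face n.+1 i c b);
  interchange : forall n i j (a b c d : cell n.+1),
    1 <= i <= n.+1 -> 1 <= j <= n.+1 -> i != j ->
    face n i true a = face n i false b -> face n i true c = face n i false d ->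
    face n j true a = face n j false c -> face n j true b = face n j false d ->
    comp n j (comp n i a b) (comp n i c d) = comp n i (comp n j a c) (comp n j b d);
  degen_comp_le : forall n i j (a b : cell n.+1), 1 <= i <= j -> j <= n.+1 ->
    face n j true a = face n j false b ->
    degen n.+1 i (comp n j a b) = comp n.+1 j.+1 (degen n.+1 i a) (degen n.+1 i b);
  degen_comp_gt : forall n i j (a b : cell n.+1), 1 <= j < i -> i <= n.+2 ->
    face n j true a = face n j false b ->
    degen n.+1 i (comp n j a b) = comp n.+1 j (degen n.+1 i a) (degen n.+1 i b);
  conn_comp_lt : forall n i j c (a b : cell n.+1), 1 <= i < j -> j <= n.+1 ->
    face n j true a = face n j false b ->
    conn n.+1 i c (comp n j a b) = comp n.+1 j.+1 (conn n.+1 i c a) (conn n.+1 i c b);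
  conn_comp_gt : forall n i j c (a b : cell n.+1), 1 <= j < i -> i <= n.+1 ->
    face n j true a = face n j false b ->
    conn n.+1 i c (comp n j a b) = comp n.+1 j (conn n.+1 i c a) (conn n.+1 i c b);
  conn_plus_comp : forall n j (a b : cell n.+1), 1 <= j <= n.+1 ->
    face n j true a = face n j false b ->
    conn n.+1 j true (comp n j a b) =
    comp n.+1 j.+1 (comp n.+1 j (conn n.+1 j true a) (degen n.+1 j a))
                   (comp n.+1 j (degen n.+1 j.+1 a) (conn n.+1 j true b));
  conn_minus_comp : forall n j (a b : cell n.+1), 1 <= j <= n.+1 ->
    face n j true a = face n j false b ->
    conn n.+1 j false (comp n j a b) =
    comp n.+1 j.+1 (comp n.+1 j (conn n.+1 j false a) (degen n.+1 j.+1 b))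
                   (comp n.+1 j (degen n.+1 j b) (conn n.+1 j false b));
  comp_assoc : forall n j (a b c : cell n.+1), 1 <= j <= n.+1 ->
    face n j true a = face n j false b -> face n j true b = face n j false c ->
    comp n j (comp n j a b) c = comp n j a (comp n j b c);
  comp_id_l : forall n j (a : cell n.+1), 1 <= j <= n.+1 ->
    comp n j (degen n j (face n j false a)) a = a;
  comp_id_r : forall n j (a : cell n.+1), 1 <= j <= n.+1 ->
    comp n j a (degen n j (face n j true a)) = a;
  conn_cancel : forall n i (x : cell n.+1), 1 <= i <= n.+1 ->
    comp n.+1 i (conn n.+1 i true x) (conn n.+1 i false x) = degen n.+1 i.+1 x /\
    comp n.+1 i.+1 (conn n.+1 i true x) (conn n.+1 i false x) = degen n.+1 i x
}.

Record CubMorph (G H : CubCat) := {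
  fmap : forall n, cell G n -> cell H n;
  fmap_face : forall n i a (x : cell G n.+1), 1 <= i <= n.+1 ->
    fmap n (face G n i a x) = face H n i a (fmap n.+1 x);
  fmap_degen : forall n i (x : cell G n), 1 <= i <= n.+1 ->
    fmap n.+1 (degen G n i x) = degen H n i (fmap n x);
  fmap_conn : forall n i a (x : cell G n), 1 <= i <= n ->
    fmap n.+1 (conn G n i a x) = conn H n i a (fmap n x);
  fmap_comp : forall n j (x y : cell G n.+1), 1 <= j <= n.+1 ->
    face G n j true x = face G n j false y ->
    fmap n.+1 (comp G n j x y) = comp H n j (fmap n.+1 x) (fmap n.+1 y)
}.

Definition cub_iso (G H : CubCat) (f : CubMorph G H) : Prop :=
  exists g : CubMorph H G,
    (forall n (x : cell G n), fmap H G g n (fmap G H f n x) = x) /\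
    (forall n (y : cell H n), fmap G H f n (fmap H G g n y) = y).

Definition psi (G : CubCat) (n i : nat) (x : cell G n.+2) : cell G n.+2 :=
  comp G n.+1 i.+1
    (comp G n.+1 i.+1 (conn G n.+1 i true (face G n.+1 i.+1 false x)) x)
    (conn G n.+1 i false (face G n.+1 i.+1 true x)).

(* psi_i on G_m (only meaningful for 1 <= i <= m-1; identity for m <= 1,
   where there are no folding operations). *)
Definition psiAt (G : CubCat) (m i : nat) : cell G m -> cell G m :=
  match m as m0 return cell G m0 -> cell G m0 with
  | S (S n) => psi G n i
  | _ => fun x => x
  end.

(* Psi_r = psi_{r-1} ... psi_1  (psi_1 applied first). *)
Definition PsiAt (G : CubCat) (m r : nat) (x : cell G m) : cell G m :=
  foldl (fun y i => psiAt G m i y) x (iota 1 r.-1).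

(* Phi_m = Psi_1 Psi_2 ... Psi_m  (Psi_m applied first); Phi_0 = id. *)
Definition PhiAt (G : CubCat) (m : nat) (x : cell G m) : cell G m :=
  foldl (fun y r => PsiAt G m r y) x (rev (iota 1 m)).

(* ---- The omega-category gamma G, as a setoid presentation of the colimit
   of Phi_0(G_0) -eps_1-> Phi_1(G_1) -eps_1-> ... ---- *)

Definition elt (G : CubCat) := {n : nat & cell G n}.

Definition inPhi (G : CubCat) (t : elt G) : Prop :=
  exists y, projT2 t = PhiAt G (projT1 t) y.

Fixpoint liftk (G : CubCat) (k n : nat) : cell G n -> cell G (k + n) :=
  match k as k0 return cell G n -> cell G (k0 + n) with
  | 0 => fun x => x
  | S k' => fun x => degen G (k' + n) 1 (liftk G k' n x)
  end.

Definition up (G : CubCat) (t : elt G) (k : nat) : elt G :=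
  existT _ (k + projT1 t) (liftk G k (projT1 t) (projT2 t)).

Definition crel (G : CubCat) (t u : elt G) : Prop :=
  exists k l, up G t k = up G u l.

Fixpoint downto (G : CubCat) (a : bool) (p n : nat) : cell G n -> elt G :=
  match n as n0 return cell G n0 -> elt G with
  | 0 => fun x => existT _ 0 x
  | S n' => fun x => if p <= n' then downto G a p n' (face G n' 1 a x)
                     else existT _ (S n') x
  end.

(* d^a_p x = eps_1^{n-p} (d^a_1)^{n-p} x for p < n, and x for p >= n;
   in the colimit eps_1^{n-p} can be dropped. *)
Definition dglob (G : CubCat) (a : bool) (p : nat) (t : elt G) : elt G :=
  downto G a p (projT1 t) (projT2 t).

Fixpoint liftto (G : CubCat) (N : nat) (t : elt G) : option (cell G N) :=
  match @eqnP (projT1 t) N with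
  | ReflectT e => Some (eq_rect _ (cell G) (projT2 t) _ e)
  | ReflectF _ =>
      match N as N0 return option (cell G N0) with
      | 0 => None
      | S N' => option_map (degen G N' 1) (liftto G N' t)
      end
  end.

Definition compAt (G : CubCat) (N j : nat) : cell G N -> cell G N -> cell G N :=
  match N as N0 return cell G N0 -> cell G N0 -> cell G N0 with
  | 0 => fun x _ => x
  | S M => comp G M j
  end.

(* x #_p y = x o_{N-p} y, computed at a common dimension N > p. *)
Definition cglob (G : CubCat) (p : nat) (t u : elt G) : elt G :=
  let N := maxn (maxn (projT1 t) (projT1 u)) p.+1 in
  match liftto G N t, liftto G N u with
  | Some x, Some y => existT _ N (compAt G N (N - p) x y)
  | _, _ => t
  end.

(* Setoid presentation of a globular omega-category: carrier of
   representatives, the subset of actual cells, the equality, the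
   source/target maps d^a_p and compositions #_p (x #_p y defined iff
   d^+_p x = d^-_p y). *)
Record OmegaS := {
  ocar : Type;
  omem : ocar -> Prop;
  oeq : ocar -> ocar -> Prop;
  od : bool -> nat -> ocar -> ocar;
  ocomp : nat -> ocar -> ocar -> ocar
}.

Definition gammaS (G : CubCat) : OmegaS :=
  {| ocar := elt G; omem := inPhi G; oeq := crel G;
     od := dglob G; ocomp := cglob G |}.

Definition omega_morph (A B : OmegaS) (phi : ocar A -> ocar B) : Prop :=
  (forall x, omem A x -> omem B (phi x)) /\
  (forall x y, omem A x -> omem A y -> oeq A x y -> oeq B (phi x) (phi y)) /\
  (forall a p x, omem A x -> oeq B (phi (od A a p x)) (od B a p (phi x))) /\
  (forall p x y, omem A x -> omem A y -> oeq A (od A true p x) (od A false p y) ->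
     oeq B (phi (ocomp A p x y)) (ocomp B p (phi x) (phi y))).

Definition omega_iso (A B : OmegaS) (phi : ocar A -> ocar B) : Prop :=
  omega_morph A B phi /\
  exists psi0 : ocar B -> ocar A, omega_morph B A psi0 /\
    (forall x, omem A x -> oeq A (psi0 (phi x)) x) /\
    (forall y, omem B y -> oeq B (phi (psi0 y)) y).

Definition gamma_map (G H : CubCat) (f : CubMorph G H) (t : elt G) : elt H :=
  existT _ (projT1 t) (fmap G H f (projT1 t) (projT2 t)).

(* A folding can be undone: for x in G_(n+2) and 1 <= i <= n+1,
     x = (unfold_left x o_i psi_i x) o_i unfold_right x,
   where both outer factors are composites of degeneracies and connections of
   faces of x.  So if f is bijective in dimension n+1, then f x = f y together
   with psi_i x = psi_i y forces x = y, and a preimage of psi_i y yields one of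
   y; the same then holds for Phi, a composite of foldings.  An inverse of
   gamma f shows that f is injective on each Phi(G_m) and reaches every
   Phi(H_m), so by induction on the dimension f is bijective, and since f is
   injective its pointwise inverse preserves the structure. *)

From Pilot Require Import Defs.
From mathcomp Require Import all_boot zify.
From Stdlib Require Import ClassicalEpsilon.
Import Defs. (* so that [comp] is the cubical composition, not [ssrfun.comp] *)

Definition half_fold (C : CubCat) n i (x : cell C n.+2) : cell C n.+2 :=
  comp C n.+1 i.+1 (conn C n.+1 i true (face C n.+1 i.+1 false x)) x.

Definition unfold_left (C : CubCat) n i (x : cell C n.+2) : cell C n.+2 :=
  comp C n.+1 i.+1
    (comp C n.+1 i.+1
       (degen C n.+1 i (face C n.+1 i false (conn C n.+1 i true (face C n.+1 i.+1 false x))))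
       (degen C n.+1 i (face C n.+1 i false x)))
    (conn C n.+1 i true (face C n.+1 i.+1 true x)).

Definition unfold_right (C : CubCat) n i (x : cell C n.+2) : cell C n.+2 :=
  comp C n.+1 i.+1 (conn C n.+1 i false (face C n.+1 i.+1 false x))
    (degen C n.+1 i (face C n.+1 i true x)).

Section Unfolding.

Context {C : CubCat} {n i : nat}.
Hypothesis i_range : 1 <= i <= n.+1.

Let i_le : 1 <= i <= n.+2. Proof. lia. Qed.
Let i_lt_Si : 1 <= i < i.+1. Proof. lia. Qed.
Let Si_le : i.+1 <= n.+2. Proof. lia. Qed.
Let Si_neq_i : i.+1 != i. Proof. lia. Qed.

Let face_degen_i al (v : cell C n.+1) : face C n.+1 i al (degen C n.+1 i v) = v.
Proof. exact: face_degen_eq. Qed.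

Let face_Si_degen_i al (v : cell C n.+1) :
  face C n.+1 i.+1 al (degen C n.+1 i v) = degen C n i (face C n i al v).
Proof. exact: face_degen_gt. Qed.

Let face_degen_i_low al (w : cell C n) : face C n i al (degen C n i w) = w.
Proof. exact: face_degen_eq. Qed.

Let faces_conn_same al (u : cell C n.+1) :
  face C n.+1 i al (conn C n.+1 i al u) = u /\ face C n.+1 i.+1 al (conn C n.+1 i al u) = u.
Proof. exact: face_conn_same. Qed.

Let faces_conn_plus (u : cell C n.+1) :
  face C n.+1 i false (conn C n.+1 i true u) = degen C n i (face C n i false u) /\
  face C n.+1 i.+1 false (conn C n.+1 i true u) = degen C n i (face C n i false u).
Proof. exact: (face_conn_opp C n i false). Qed.

Let faces_conn_minus (u : cell C n.+1) :
  face C n.+1 i true (conn C n.+1 i false u) = degen C n i (face C n i true u) /\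
  face C n.+1 i.+1 true (conn C n.+1 i false u) = degen C n i (face C n i true u).
Proof. exact: (face_conn_opp C n i true). Qed.

Let face_face_Si al be (y : cell C n.+2) :
  face C n i al (face C n.+1 i.+1 be y) = face C n i be (face C n.+1 i al y).
Proof. exact: face_face. Qed.

Variable x : cell C n.+2.

Local Notation a := (face C n.+1 i.+1 false x).
Local Notation b := (face C n.+1 i.+1 true x).
Local Notation left_id := (degen C n.+1 i (face C n.+1 i false (conn C n.+1 i true a))).
Local Notation left_base := (comp C n.+1 i.+1 left_id (degen C n.+1 i (face C n.+1 i false x))).

Lemma half_fold_composable :
  face C n.+1 i.+1 true (conn C n.+1 i true a) = face C n.+1 i.+1 false x.
Proof. exact: (faces_conn_same true a).2. Qed.

Lemma psi_composable :
  face C n.+1 i.+1 true (half_fold C n i x) = face C n.+1 i.+1 false (conn C n.+1 i false b).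
Proof.
by rewrite comp_face_plus ?half_fold_composable // (faces_conn_same false b).2.
Qed.

Lemma unfold_left_composable :
  face C n.+1 i.+1 true left_id = face C n.+1 i.+1 false (degen C n.+1 i (face C n.+1 i false x)) /\
  face C n.+1 i.+1 true left_base = face C n.+1 i.+1 false (conn C n.+1 i true b).
Proof.
have c : face C n.+1 i.+1 true left_id =
         face C n.+1 i.+1 false (degen C n.+1 i (face C n.+1 i false x)).
  by rewrite !face_Si_degen_i (faces_conn_plus a).1 face_degen_i_low face_face_Si.
by split=> //; rewrite comp_face_plus // face_Si_degen_i (faces_conn_plus b).2 face_face_Si.
Qed.

Lemma unfold_right_composable :
  face C n.+1 i.+1 true (conn C n.+1 i false a) =
  face C n.+1 i.+1 false (degen C n.+1 i (face C n.+1 i true x)).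
Proof. by rewrite (faces_conn_minus a).2 face_Si_degen_i face_face_Si. Qed.

Let left_base_composable : face C n.+1 i true left_base = face C n.+1 i false (half_fold C n i x).
Proof.
have [c _] := unfold_left_composable.
by rewrite !comp_face_lt ?half_fold_composable // !face_degen_i.
Qed.

Let conn_b_composable :
  face C n.+1 i true (conn C n.+1 i true b) = face C n.+1 i false (conn C n.+1 i false b).
Proof. by rewrite (faces_conn_same true b).1 (faces_conn_same false b).1. Qed.

Let conn_a_composable :
  face C n.+1 i true (conn C n.+1 i true a) = face C n.+1 i false (conn C n.+1 i false a).
Proof. by rewrite (faces_conn_same true a).1 (faces_conn_same false a).1. Qed.

Lemma unfold_left_psi_composable :
  face C n.+1 i true (unfold_left C n i x) = face C n.+1 i false (psi C n i x).
Proof.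
have [_ c1] := unfold_left_composable; have c2 := psi_composable.
rewrite /unfold_left /psi -/(half_fold C n i x).
rewrite (comp_face_lt C n i i.+1 true) // (comp_face_lt C n i i.+1 false) //.
by rewrite left_base_composable conn_b_composable.
Qed.

Lemma unfold_left_psi :
  comp C n.+1 i (unfold_left C n i x) (psi C n i x) = half_fold C n i x.
Proof.
have [c1 c2] := unfold_left_composable.
have c3 := half_fold_composable; have c4 := psi_composable.
(* Interchange o_i with o_(i+1); then Gamma^+ b o_i Gamma^- b = eps_(i+1) b,
   and [left_id] is an o_i-identity. *)
rewrite /unfold_left /psi -/(half_fold C n i x) (interchange C n.+1 i.+1 i) //.
rewrite (conn_cancel C n i b i_range).1 (interchange C n.+1 i.+1 i) ?face_degen_i //.
by rewrite !comp_id_l // -(comp_face_plus C n.+1 i.+1 (conn C n.+1 i true a) x) // comp_id_r.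
Qed.

Lemma half_fold_unfold_right_composable :
  face C n.+1 i true (half_fold C n i x) = face C n.+1 i false (unfold_right C n i x).
Proof.
have c1 := half_fold_composable; have c2 := unfold_right_composable.
rewrite /half_fold /unfold_right.
rewrite (comp_face_lt C n i i.+1 true) // (comp_face_lt C n i i.+1 false) //.
by rewrite conn_a_composable face_degen_i.
Qed.

Lemma half_fold_unfold_right :
  comp C n.+1 i (half_fold C n i x) (unfold_right C n i x) = x.
Proof.
have c1 := half_fold_composable; have c2 := unfold_right_composable.
rewrite (interchange C n.+1 i.+1 i) // (conn_cancel C n i a i_range).1.
by rewrite comp_id_r // comp_id_l.
Qed.

Lemma psi_unfold :
  comp C n.+1 i (comp C n.+1 i (unfold_left C n i x) (psi C n i x)) (unfold_right C n i x) = x.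
Proof. by rewrite unfold_left_psi half_fold_unfold_right. Qed.

End Unfolding.

Definition fold_indices m := flatten [seq iota 1 r.-1 | r <- rev (iota 1 m)].

Lemma PhiAt_foldl (C : CubCat) m (x : cell C m) :
  PhiAt C m x = foldl (fun y i => psiAt C m i y) x (fold_indices m).
Proof.
rewrite /PhiAt /PsiAt /fold_indices.
by elim: (rev _) x => //= r s IH x; rewrite foldl_cat IH.
Qed.

Lemma mem_fold_indices m i : i \in fold_indices m -> 1 <= i < m.
Proof.
case/flattenP=> s /mapP[r]; rewrite mem_rev !mem_iota => r_range -> /=.
rewrite mem_iota; lia.
Qed.

Definition has_preimage (G H : CubCat) (f : CubMorph G H) m (y : cell H m) :=
  exists x, fmap G H f m x = y.
Arguments has_preimage {G H} f m y.

Section Morphism.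

Context {G H : CubCat} {f : CubMorph G H}.
Local Notation fm := (fmap G H f).

Lemma fmap_psi n i (x : cell G n.+2) : 1 <= i <= n.+1 ->
  fm n.+2 (psi G n i x) = psi H n i (fm n.+2 x).
Proof.
move=> i_range; have Si_range : 1 <= i.+1 <= n.+2 by lia.
rewrite /psi -/(half_fold G n i x) fmap_comp ?psi_composable //.
by rewrite fmap_comp ?half_fold_composable // !fmap_conn // !fmap_face.
Qed.

Lemma fmap_psiAt m i (x : cell G m) : 1 <= i < m ->
  fm m (psiAt G m i x) = psiAt H m i (fm m x).
Proof. by case: m x => [|[|n]] x i_range //=; apply: fmap_psi; lia. Qed.

Lemma fmap_PhiAt m (x : cell G m) : fm m (PhiAt G m x) = PhiAt H m (fm m x).
Proof.
rewrite !PhiAt_foldl; move: (@mem_fold_indices m).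
elim: (fold_indices m) x => [//|i s IH] x s_range /=.
rewrite IH => [|j j_s]; last by apply: s_range; rewrite in_cons j_s orbT.
by rewrite fmap_psiAt // s_range ?mem_head.
Qed.

Lemma psiAt_detect {m i} {x y : cell G m.+1} : injective (fm m) -> 1 <= i <= m ->
  fm m.+1 x = fm m.+1 y -> psiAt G m.+1 i x = psiAt G m.+1 i y -> x = y.
Proof.
case: m x y => [|n] x y fm_inj i_range fxy /= Epsi; first lia.
have faces_eq j al : 1 <= j <= n.+2 -> face G n.+1 j al x = face G n.+1 j al y.
  by move=> j_range; apply: fm_inj; rewrite !fmap_face // fxy.
have i_le : 1 <= i <= n.+2 by lia.
have Si_range : 1 <= i.+1 <= n.+2 by lia.
rewrite -(psi_unfold i_range x) -(psi_unfold i_range y) Epsi.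
by rewrite /unfold_left /unfold_right !faces_eq.
Qed.

Lemma PhiAt_detect {m} {x y : cell G m.+1} : injective (fm m) ->
  fm m.+1 x = fm m.+1 y -> PhiAt G m.+1 x = PhiAt G m.+1 y -> x = y.
Proof.
move=> fm_inj; rewrite !PhiAt_foldl; move: (@mem_fold_indices m.+1).
elim: (fold_indices m.+1) x y => [//|i s IH] x y s_range fxy EPhi.
have i_range : 1 <= i <= m by move: (s_range i (mem_head _ _)); lia.
apply: (psiAt_detect fm_inj i_range fxy).
apply: IH EPhi => [j j_s|]; first by apply: s_range; rewrite in_cons j_s orbT.
by rewrite !fmap_psiAt ?fxy.
Qed.

Lemma has_preimage_comp n j (u v : cell H n.+1) : injective (fm n) ->
  has_preimage f n.+1 u -> has_preimage f n.+1 v -> 1 <= j <= n.+1 ->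
  face H n j true u = face H n j false v -> has_preimage f n.+1 (comp H n j u v).
Proof.
move=> fm_inj [p <-] [q <-] j_range /=.
rewrite -!fmap_face // => /fm_inj pq.
by exists (comp G n j p q); rewrite fmap_comp.
Qed.

Lemma has_preimage_degen n i (y : cell H n) : (forall z, has_preimage f n z) ->
  1 <= i <= n.+1 -> has_preimage f n.+1 (degen H n i y).
Proof.
by move=> fm_surj i_range; have [p <-] := fm_surj y; exists (degen G n i p); rewrite fmap_degen.
Qed.

Lemma has_preimage_conn n i al (y : cell H n) : (forall z, has_preimage f n z) ->
  1 <= i <= n -> has_preimage f n.+1 (conn H n i al y).
Proof.
by move=> fm_surj i_range; have [p <-] := fm_surj y; exists (conn G n i al p); rewrite fmap_conn.
Qed.

Lemma psiAt_reflect_preimage {m i} {y : cell H m.+1} :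
  injective (fm m) -> (forall z, has_preimage f m z) -> 1 <= i <= m ->
  has_preimage f m.+1 (psiAt H m.+1 i y) -> has_preimage f m.+1 y.
Proof.
case: m y => [|n] y fm_inj fm_surj i_range /= psi_pre; first lia.
have i_le : 1 <= i <= n.+2 by lia.
have Si_range : 1 <= i.+1 <= n.+2 by lia.
have [c1 c2] := unfold_left_composable i_range y.
have c3 := unfold_right_composable i_range y.
have c4 := unfold_left_psi_composable i_range y.
have c5 : face H n.+1 i true (comp H n.+1 i (unfold_left H n i y) (psi H n i y)) =
          face H n.+1 i false (unfold_right H n i y).
  by rewrite unfold_left_psi // half_fold_unfold_right_composable.
rewrite -(psi_unfold i_range y); apply: has_preimage_comp => //; last first.
  by apply: has_preimage_comp => //; [exact: has_preimage_conn | exact: has_preimage_degen].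
apply: has_preimage_comp => //; apply: has_preimage_comp => //; last exact: has_preimage_conn.
by apply: has_preimage_comp => //; exact: has_preimage_degen.
Qed.

Lemma PhiAt_reflect_preimage {m} {y : cell H m.+1} :
  injective (fm m) -> (forall z, has_preimage f m z) ->
  has_preimage f m.+1 (PhiAt H m.+1 y) -> has_preimage f m.+1 y.
Proof.
move=> fm_inj fm_surj; rewrite PhiAt_foldl; move: (@mem_fold_indices m.+1).
elim: (fold_indices m.+1) y => [//|i s IH] y s_range /IH pre_psi.
have i_range : 1 <= i <= m by move: (s_range i (mem_head _ _)); lia.
apply: (psiAt_reflect_preimage fm_inj fm_surj i_range); apply: pre_psi => j j_s.
by apply: s_range; rewrite in_cons j_s orbT.
Qed.

End Morphism.

Lemma existT_cell_inj (C : CubCat) m : injective (existT (cell C) m).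
Proof. by move=> x y /(congr1 (tagged_as (Tagged (cell C) x))); rewrite !tagged_asE. Qed.

Lemma iter_morph {A B : Type} {h : A -> B} {F : A -> A} {F' : B -> B} k :
  {morph h : x / F x >-> F' x} -> {morph h : x / iter k F x >-> iter k F' x}.
Proof. by move=> hF x; elim: k => //= k IH; rewrite hF IH. Qed.

Lemma PhiAt_inPhi {C : CubCat} {m} (x : cell C m) : inPhi C (existT _ m (PhiAt C m x)).
Proof. by exists x. Qed.

Section Colimit.

Variable C : CubCat.

Definition up1 (t : elt C) : elt C :=
  existT _ (projT1 t).+1 (degen C (projT1 t) 1 (projT2 t)).

(* A left inverse of [up1]; its value on 0-cells is irrelevant. *)
Definition down1 (t : elt C) : elt C :=
  let: existT m w := t in
  match m return cell C m -> elt C with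
  | 0 => fun w => existT _ 0 w
  | k.+1 => fun w => existT _ k (face C k 1 false w)
  end w.

Lemma up1K : cancel up1 down1.
Proof. by case=> m w /=; rewrite face_degen_eq. Qed.

Lemma iter_up1K k : cancel (iter k up1) (iter k down1).
Proof. by move=> t; elim: k => // k IH; rewrite iterSr up1K. Qed.

Lemma up_iter (t : elt C) k : up C t k = iter k up1 t.
Proof. by case: t => m w; elim: k => // k IH; rewrite iterS -IH. Qed.

Lemma dim_iter_up1 k (t : elt C) : projT1 (iter k up1 t) = k + projT1 t.
Proof. by elim: k => //= k ->. Qed.

Lemma crel_dim_eq {t u v : elt C} :
  crel C t u -> crel C t v -> projT1 u = projT1 v -> u = v.
Proof.
case=> k [l]; rewrite !up_iter => Etu [k' [l']]; rewrite !up_iter => Etv dim_uv.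
have E : iter (k' + l) up1 u = iter (k + l') up1 v.
  by rewrite !iterD -Etu -Etv -!iterD addnC.
have kl : k' + l = k + l'.
  by move/(congr1 (@projT1 _ _)): E; rewrite !dim_iter_up1 dim_uv; lia.
by move: E; rewrite kl => /(can_inj (iter_up1K _)).
Qed.

End Colimit.

Section Gamma.

Context {G H : CubCat} {f : CubMorph G H}.
Local Notation fm := (fmap G H f).
Local Notation gf := (gamma_map G H f).

Lemma gamma_map_up1 : {morph gf : t / up1 G t >-> up1 H t}.
Proof. by case=> m w; rewrite /gamma_map /= fmap_degen. Qed.

Lemma gamma_map_down1 : {morph gf : t / down1 G t >-> down1 H t}.
Proof. by case=> [[|m] w] //; rewrite /gamma_map /= fmap_face. Qed.

Lemma crel_gamma_image {t : elt G} {u} : crel H (gf t) u -> exists t0, gf t0 = u.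
Proof.
case=> k [l]; rewrite !up_iter => E.
exists (iter l (down1 G) (iter k (up1 G) t)).
by rewrite (iter_morph _ gamma_map_down1) (iter_morph _ gamma_map_up1) E iter_up1K.
Qed.

Section LeftInverse.

Context {g : elt H -> elt G}.
Hypothesis gK : forall t, inPhi G t -> crel G (g (gf t)) t.

Lemma PhiAt_eq_of_fmap_eq {m} {x y : cell G m} :
  fm m x = fm m y -> PhiAt G m x = PhiAt G m y.
Proof.
move=> fxy; apply: existT_cell_inj.
have Egf : gf (existT _ m (PhiAt G m x)) = gf (existT _ m (PhiAt G m y)).
  by rewrite /gamma_map /= !fmap_PhiAt fxy.
apply: (crel_dim_eq G (gK _ (PhiAt_inPhi x))) => //.
by rewrite Egf; exact: gK (PhiAt_inPhi y).
Qed.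

Lemma fmap_injective m : injective (fm m).
Proof.
elim: m => [|m IH] x y fxy; first exact: PhiAt_eq_of_fmap_eq fxy.
exact: PhiAt_detect IH fxy (PhiAt_eq_of_fmap_eq fxy).
Qed.

End LeftInverse.

Section RightInverse.

Context {g : elt H -> elt G}.
Hypothesis Kg : forall t, inPhi H t -> crel H (gf (g t)) t.

Lemma PhiAt_has_preimage {m} (y : cell H m) : has_preimage f m (PhiAt H m y).
Proof.
have [[k w] E] := crel_gamma_image (Kg _ (PhiAt_inPhi y)).
move: E; rewrite /gamma_map /= => E.
have km : k = m := congr1 (@projT1 _ _) E.
by subst k; exists w; exact: existT_cell_inj E.
Qed.

Lemma fmap_surjective : (forall m, injective (fm m)) -> forall m y, has_preimage f m y.
Proof.
move=> fm_inj; elim=> [|m IH] y; first exact: PhiAt_has_preimage.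
exact: PhiAt_reflect_preimage (fm_inj m) IH (PhiAt_has_preimage y).
Qed.

End RightInverse.

Lemma cub_iso_of_bijective :
  (forall m, injective (fm m)) -> (forall m y, has_preimage f m y) -> cub_iso G H f.
Proof.
move=> fm_inj fm_surj.
pose g m y := proj1_sig (constructive_indefinite_description _ (fm_surj m y)).
have gK m y : fm m (g m y) = y by rewrite /g; case: constructive_indefinite_description.
have g_face m j al (y : cell H m.+1) : 1 <= j <= m.+1 ->
    g m (face H m j al y) = face G m j al (g m.+1 y).
  by move=> j_range; apply: fm_inj; rewrite fmap_face // !gK.
have g_degen m j (y : cell H m) : 1 <= j <= m.+1 ->
    g m.+1 (degen H m j y) = degen G m j (g m y).
  by move=> j_range; apply: fm_inj; rewrite fmap_degen // !gK.
have g_conn m j al (y : cell H m) : 1 <= j <= m ->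
    g m.+1 (conn H m j al y) = conn G m j al (g m y).
  by move=> j_range; apply: fm_inj; rewrite fmap_conn // !gK.
have g_comp m j (y z : cell H m.+1) : 1 <= j <= m.+1 ->
    face H m j true y = face H m j false z ->
    g m.+1 (comp H m j y z) = comp G m j (g m.+1 y) (g m.+1 z).
  by move=> j_range yz; apply: fm_inj; rewrite fmap_comp ?gK // -!g_face // yz.
exists (Build_CubMorph _ _ g g_face g_degen g_conn g_comp).
by split=> m x //=; apply: fm_inj; rewrite gK.
Qed.

End Gamma.

Theorem theorem8p6 (G H : CubCat) (f : CubMorph G H) :
  omega_iso (gammaS G) (gammaS H) (gamma_map G H f) -> cub_iso G H f.
Proof.
move=> [_ [g [_ [gK Kg]]]].
have fm_inj := fmap_injective gK.
exact: cub_iso_of_bijective fm_inj (fmap_surjective Kg fm_inj).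
Qed.
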